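(* Let $(A_i,\omega_i)$, $i=1,2$, be associative baric algebras over $K$. Then the following are equivalent: (i) $A_1\bowtie A_2$ is associative; (ii) $A_1\bowtie A_2$ is left alternative; (iii) $A_1\bowtie A_2$ is right alternative.
   Context: A baric algebra over a field $K$ is a pair $(A,\omega)$ where $A$ is a (not necessarily associative) $K$-algebra and $\omega:A\to K$ is a nonzero $K$-algebra homomorphism. For baric algebras $(A_1,\omega_1),(A_2,\omega_2)$, $A_1\bowtie A_2$ denotes the vector space $A_1\oplus A_2$ with product $(a_1,a_2)(b_1,b_2)=(a_1b_1+\omega_2(b_2)a_1,\ a_2b_2+\omega_1(b_1)a_2)$. With associator $(x,y,z)=(xy)z-x(yz)$, an algebra is left alternative if $(x,x,y)=0$ for all $x,y$, and right alternative if $(x,y,y)=0$ for all $x,y$. *)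

(* A (not necessarily associative) K-algebra is a K-vector
   space A (lmodType K) with a bilinear multiplication mul : A -> A -> A. *)
From HB Require Import structures.
From mathcomp Require Import all_boot all_order all_algebra.
Set Implicit Arguments. Unset Strict Implicit. Unset Printing Implicit Defensive.
Import GRing.Theory.
Local Open Scope ring_scope.

Definition bilinear_mul (K : fieldType) (A : lmodType K) (mul : A -> A -> A) :=
  (forall (a : K) (x y z : A), mul (a *: x + y) z = a *: mul x z + mul y z) /\
  (forall (a : K) (x y z : A), mul x (a *: y + z) = a *: mul x y + mul x z).

Definition baric (K : fieldType) (A : lmodType K) (mul : A -> A -> A)
    (w : A -> K) :=
  [/\ bilinear_mul mul,
      (forall (a : K) (x y : A), w (a *: x + y) = a * w x + w y),
      (forall x y : A, w (mul x y) = w x * w y) &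
      exists x : A, w x != 0].

Definition associator (K : fieldType) (A : lmodType K) (mul : A -> A -> A)
    (x y z : A) : A := mul (mul x y) z - mul x (mul y z).

Definition is_associative (K : fieldType) (A : lmodType K) (mul : A -> A -> A) :=
  forall x y z : A, associator mul x y z = 0.

Definition left_alternative (K : fieldType) (A : lmodType K) (mul : A -> A -> A) :=
  forall x y : A, associator mul x x y = 0.

Definition right_alternative (K : fieldType) (A : lmodType K) (mul : A -> A -> A) :=
  forall x y : A, associator mul x y y = 0.

Definition bowtie_mul (K : fieldType) (A1 A2 : lmodType K)
    (mul1 : A1 -> A1 -> A1) (w1 : A1 -> K)
    (mul2 : A2 -> A2 -> A2) (w2 : A2 -> K)
    (x y : A1 * A2) : A1 * A2 :=
  (mul1 x.1 y.1 + w2 y.2 *: x.1, mul2 x.2 y.2 + w1 y.1 *: x.2).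

(* The whole argument rests on an explicit formula for the associator of
   A1 ⋈ A2.  Using bilinearity, associativity of A1 and the fact that w2 is
   an algebra homomorphism, the first component of (x,y,z) is
        w2(y2) (x1 z1 - w1(z1) x1),
   and symmetrically the second component is w1(y1) (x2 z2 - w2(z2) x2); the
   second formula is the first one read through the swap A1 ⋈ A2 ≅ A2 ⋈ A1.
   Call (A,w) "right weighted" if a c = w(c) a for all a, c.  Then:
   - if A1 and A2 are right weighted, A1 ⋈ A2 is associative;
   - conversely, choosing e_i with w_i(e_i) <> 0 and evaluating the formula at
     x = (a,e2), y = (a,e2) or (c,e2), z = (c,e2) shows that left (resp. right)
     alternativity forces A1 (and symmetrically A2) to be right weighted. *)
From HB Require Import structures.
From mathcomp Require Import all_boot all_order all_algebra.
Local Open Scope ring_scope.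
Import GRing.Theory.
Set Implicit Arguments. Unset Strict Implicit.

Lemma eq0_of_double (V : zmodType) (x : V) : x = x + x -> x = 0.
Proof. by move=> h; apply: (addrI x); rewrite addr0 -h. Qed.

Section BilinearProduct.
Variables (K : fieldType) (A : lmodType K) (mul : A -> A -> A).
Hypothesis mul_bilin : bilinear_mul mul.

Lemma bmul0l x : mul 0 x = 0.
Proof.
case: mul_bilin => hl _; apply: eq0_of_double.
by have := hl 1 0 0 x; rewrite !scale1r addr0.
Qed.

Lemma bmul0r x : mul x 0 = 0.
Proof.
case: mul_bilin => _ hr; apply: eq0_of_double.
by have := hr 1 x 0 0; rewrite !scale1r addr0.
Qed.

Lemma bmulDl x y z : mul (x + y) z = mul x z + mul y z.
Proof. by case: mul_bilin => hl _; rewrite -(scale1r x) hl !scale1r. Qed.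

Lemma bmulDr x y z : mul x (y + z) = mul x y + mul x z.
Proof. by case: mul_bilin => _ hr; rewrite -(scale1r y) hr !scale1r. Qed.

Lemma bmulZl a x z : mul (a *: x) z = a *: mul x z.
Proof. by case: mul_bilin => hl _; rewrite -(addr0 (a *: x)) hl bmul0l addr0. Qed.

Lemma bmulZr a x z : mul x (a *: z) = a *: mul x z.
Proof. by case: mul_bilin => _ hr; rewrite -(addr0 (a *: z)) hr bmul0r addr0. Qed.
End BilinearProduct.

Section Weight.
Variables (K : fieldType) (A : lmodType K) (mul : A -> A -> A) (w : A -> K).
Hypothesis hbaric : baric mul w.

Lemma weight0 : w 0 = 0.
Proof.
case: hbaric => _ hw _ _; apply: eq0_of_double.
by have := hw 1 0 0; rewrite scale1r addr0 mul1r.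
Qed.

Lemma weightD x y : w (x + y) = w x + w y.
Proof. by case: hbaric => _ hw _ _; rewrite -(scale1r x) hw mul1r scale1r. Qed.

Lemma weightZ a x : w (a *: x) = a * w x.
Proof. by case: hbaric => _ hw _ _; rewrite -(addr0 (a *: x)) hw weight0 addr0. Qed.

Lemma weightM x y : w (mul x y) = w x * w y.
Proof. by case: hbaric. Qed.

Lemma baric_bilinear : bilinear_mul mul.
Proof. by case: hbaric. Qed.
End Weight.

(* A nonzero scalar can be cancelled; it removes the factor w_i(e_i) from the
   associator formula at a witness e_i of nonzero weight. *)
Lemma scaler_cancel (K : fieldType) (A : lmodType K) (k : K) (v : A) :
  k != 0 -> k *: v = 0 -> v = 0.
Proof. by move=> hk /eqP; rewrite scaler_eq0 (negbTE hk) => /eqP. Qed.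

Lemma associativeE (K : fieldType) (A : lmodType K) (mul : A -> A -> A) :
  is_associative mul -> forall x y z, mul (mul x y) z = mul x (mul y z).
Proof. by move=> h x y z; apply/eqP; rewrite -subr_eq0; apply/eqP/h. Qed.

Definition right_weighted (K : fieldType) (A : lmodType K)
    (mul : A -> A -> A) (w : A -> K) :=
  forall a c : A, mul a c = w c *: a.

Lemma addr_cancel4 (V : zmodType) (p q r s t : V) :
  p + q + (r + s) - (p + r + (s + t)) = q - t.
Proof.
have -> : p + r + (s + t) = p + (r + s) + t by rewrite !addrA.
have -> : p + q + (r + s) = p + (r + s) + q by rewrite addrAC addrA.
by rewrite [p + (r + s) + q]addrC addrKA.
Qed.

Lemma bowtie_associator_fst (K : fieldType) (A1 A2 : lmodType K)
    (mul1 : A1 -> A1 -> A1) (w1 : A1 -> K)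
    (mul2 : A2 -> A2 -> A2) (w2 : A2 -> K) :
  bilinear_mul mul1 -> is_associative mul1 -> baric mul2 w2 ->
  forall x y z,
  (associator (bowtie_mul mul1 w1 mul2 w2) x y z).1 =
    w2 y.2 *: (mul1 x.1 z.1 - w1 z.1 *: x.1).
Proof.
move=> bil1 assoc1 baric2 [x1 x2] [y1 y2] [z1 z2].
rewrite /associator /bowtie_mul /=.
rewrite !(bmulDl bil1) !(bmulDr bil1) !(bmulZl bil1) !(bmulZr bil1).
rewrite (associativeE assoc1) (weightD baric2) (weightZ baric2) (weightM baric2).
rewrite !scalerDr !scalerDl !scalerA scalerN scalerA.
by rewrite [w2 z2 * w2 y2]mulrC [w1 z1 * w2 y2]mulrC addr_cancel4.
Qed.

(* A1 ⋈ A2 and A2 ⋈ A1 are isomorphic through the swap of components, so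
   the second component of the associator is the first one of the swapped
   algebra. *)
Lemma bowtie_associator_snd (K : fieldType) (A1 A2 : lmodType K)
    (mul1 : A1 -> A1 -> A1) (w1 : A1 -> K)
    (mul2 : A2 -> A2 -> A2) (w2 : A2 -> K) :
  baric mul1 w1 -> bilinear_mul mul2 -> is_associative mul2 ->
  forall x y z,
  (associator (bowtie_mul mul1 w1 mul2 w2) x y z).2 =
    w1 y.1 *: (mul2 x.2 z.2 - w2 z.2 *: x.2).
Proof.
move=> baric1 bil2 assoc2 [x1 x2] [y1 y2] [z1 z2].
exact: (bowtie_associator_fst w2 bil2 assoc2 baric1 (x2, x1) (y2, y1) (z2, z1)).
Qed.

Section Bowtie.
Variables (K : fieldType) (A1 A2 : lmodType K)
    (mul1 : A1 -> A1 -> A1) (w1 : A1 -> K)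
    (mul2 : A2 -> A2 -> A2) (w2 : A2 -> K).
Hypotheses (baric1 : baric mul1 w1) (baric2 : baric mul2 w2)
  (assoc1 : is_associative mul1) (assoc2 : is_associative mul2).

Let mul := bowtie_mul mul1 w1 mul2 w2.

Let assoc_fst :=
  bowtie_associator_fst w1 (baric_bilinear baric1) assoc1 baric2.
Let assoc_snd :=
  bowtie_associator_snd w2 baric1 (baric_bilinear baric2) assoc2.

Lemma bowtie_associative_of_weighted :
  right_weighted mul1 w1 -> right_weighted mul2 w2 -> is_associative mul.
Proof.
move=> rw1 rw2 x y z.
have := assoc_fst x y z; have := assoc_snd x y z.
rewrite rw1 rw2 !subrr !scaler0 /mul.
by case: (associator _ x y z) => u v /= -> ->.
Qed.

(* Either alternative law, evaluated at suitable triples, makes both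
   factors right weighted; [pick] selects the repeated argument. *)
Lemma weighted_of_alternative (pick : A1 * A2 -> A1 * A2 -> A1 * A2) :
  (forall u v, pick u v = u \/ pick u v = v) ->
  (forall u v, associator mul u (pick u v) v = 0) ->
  right_weighted mul1 w1 /\ right_weighted mul2 w2.
Proof.
move=> pickP alt.
have [e1 we1] : exists e : A1, w1 e != 0 by case: baric1.
have [e2 we2] : exists e : A2, w2 e != 0 by case: baric2.
split=> a c; apply/eqP; rewrite -subr_eq0; apply/eqP.
- apply: (scaler_cancel we2).
  have := assoc_fst (a, e2) (pick (a, e2) (c, e2)) (c, e2).
  by rewrite alt; case: (pickP (a, e2) (c, e2)) => -> <-.
- apply: (scaler_cancel we1).
  have := assoc_snd (e1, a) (pick (e1, a) (e1, c)) (e1, c).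
  by rewrite alt; case: (pickP (e1, a) (e1, c)) => -> <-.
Qed.

Lemma bowtie_associative_of_left_alternative :
  left_alternative mul -> is_associative mul.
Proof.
move=> alt; have [rw1 rw2] := @weighted_of_alternative (fun u _ => u)
  (fun u v => or_introl erefl) alt.
exact: bowtie_associative_of_weighted.
Qed.

Lemma bowtie_associative_of_right_alternative :
  right_alternative mul -> is_associative mul.
Proof.
move=> alt; have [rw1 rw2] := @weighted_of_alternative (fun _ v => v)
  (fun u v => or_intror erefl) alt.
exact: bowtie_associative_of_weighted.
Qed.
End Bowtie.

Theorem proposition6p2 (K : fieldType) (A1 A2 : lmodType K)
    (mul1 : A1 -> A1 -> A1) (w1 : A1 -> K)
    (mul2 : A2 -> A2 -> A2) (w2 : A2 -> K) :
  baric mul1 w1 -> baric mul2 w2 ->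
  is_associative mul1 -> is_associative mul2 ->
  (is_associative (bowtie_mul mul1 w1 mul2 w2) <->
     left_alternative (bowtie_mul mul1 w1 mul2 w2)) /\
  (is_associative (bowtie_mul mul1 w1 mul2 w2) <->
     right_alternative (bowtie_mul mul1 w1 mul2 w2)).
Proof.
move=> baric1 baric2 assoc1 assoc2; split; split.
- by move=> assoc x y; apply: assoc.
- exact: bowtie_associative_of_left_alternative.
- by move=> assoc x y; apply: assoc.
- exact: bowtie_associative_of_right_alternative.
Qed.
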